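(* The matching policies FCFM, LCFM, every random policy (in particular every strict priority policy and the uniform policy U), and Match the Longest (ML) are sub-additive: for all $z',z''\in\mathcal V^*$ and all $\varsigma',\varsigma''\in\mathcal S^*$ whose letters lie in the support of $\nu_\phi$, with $|\varsigma'|=|z'|$, $|\varsigma''|=|z''|$, $$|Q_\phi(z'z'',\varsigma'\varsigma'')|\le|Q_\phi(z',\varsigma')|+|Q_\phi(z'',\varsigma'')|.$$
   Context: $G=(\mathcal V,\mathcal E)$ is a finite connected simple graph, $u - v$ denotes adjacency, $\mathcal E(v)$ the set of neighbours of $v$. A list of preferences $\sigma=(\sigma(i))_{i\in\mathcal V}\in\mathcal S$ gives, for each class $i$, a linear ordering $\sigma(i)$ of $\mathcal E(i)$. Each policy $\phi$ comes with a probability $\nu_\phi$ on $\mathcal S$. The buffer is a word $w\in\mathbb W=\{w\in\mathcal V^*:|w|_i|w|_j=0 \text{ whenever } i - j\}$ of classes of waiting items in arrival order. For $v\in\mathcal V,\sigma\in\mathcal S$, $w\odot_\phi(v,\sigma)=wv$ if no letter of $w$ is adjacent to $v$; otherwise one letter of $w$ adjacent to $v$, chosen by $\phi$, is deleted. For $z=z_1\cdots z_k\in\mathcal V^*$, $\varsigma=\varsigma_1\cdots\varsigma_k\in\mathcal S^*$, $Q_\phi(z,\varsigma)=(\cdots(\emptyset\odot_\phi(z_1,\varsigma_1))\cdots)\odot_\phi(z_k,\varsigma_k)$. Policies: FCFM deletes the leftmost letter of $w$ adjacent to $v$; LCFM deletes the rightmost one. For the other policies the class $j$ of the match is chosen from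 the class detail $x=(|w|_i)_i$ and $\sigma$ among $\mathcal P(x,v)=\{j\in\mathcal E(v):x(j)>0\}$, and the leftmost letter $j$ of $w$ is deleted. Random policy: $j$ is the first element of $\mathcal P(x,v)$ in the order $\sigma(v)$, $\nu_\phi$ arbitrary; strict priority: $\nu_\phi$ a Dirac mass; uniform U: $\nu_\phi$ uniform on $\mathcal S$. ML: $\nu_\phi$ uniform on $\mathcal S$ and $j$ is the first element, in the order $\sigma(v)$, of the set of $j\in\mathcal E(v)$ maximizing $x(j)$ (among those with $x(j)>0$). *)

From mathcomp Require Import all_boot.
Set Implicit Arguments. Unset Strict Implicit. Unset Printing Implicit Defensive.

Section Matching.
Variables (T : finType) (e : rel T).

(* A list of preferences: for each class i, a sequence sigma i listing the
   neighbours of i (a linear order on E(i)). *)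
Definition prefs := {ffun T -> seq T}.

Definition is_pref (s : prefs) : Prop :=
  forall i : T, uniq (s i) /\ (forall j, (j \in s i) = e i j).

Definition simple_connected_graph : Prop :=
  symmetric e /\ irreflexive e /\ (forall x y : T, connect e x y).

Definition del_at (k : nat) (w : seq T) : seq T := take k w ++ drop k.+1 w.

Inductive policy := FCFM | LCFM | RandomPol | ML.

Definition detail (w : seq T) (j : T) : nat := count_mem j w.

Definition step_fcfm (w : seq T) (v : T) : seq T :=
  if has (e v) w then del_at (find (e v) w) w else rcons w v.

(* LCFM: delete rightmost letter adjacent to v, else append v *)
Definition step_lcfm (w : seq T) (v : T) : seq T :=
  if has (e v) w then del_at ((size w).-1 - find (e v) (rev w)) w
  else rcons w v.

Definition step_random (w : seq T) (v : T) (s : prefs) : seq T :=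
  match [seq j <- s v | e v j & 0 < detail w j] with
  | [::] => rcons w v
  | j :: _ => rem j w
  end.

Definition step_ml (w : seq T) (v : T) (s : prefs) : seq T :=
  let m := \max_(j <- s v | e v j) detail w j in
  match [seq j <- s v | [&& e v j, 0 < detail w j & detail w j == m]] with
  | [::] => rcons w v
  | j :: _ => rem j w
  end.

Definition step (phi : policy) (w : seq T) (v : T) (s : prefs) : seq T :=
  match phi with
  | FCFM => step_fcfm w v
  | LCFM => step_lcfm w v
  | RandomPol => step_random w v s
  | ML => step_ml w v s
  end.

Definition Q (phi : policy) (z : seq T) (ss : seq prefs) : seq T :=
  foldl (fun w p => step phi w p.1 p.2) [::] (zip z ss).

End Matching.

From mathcomp Require Import all_boot zify.
Set Implicit Arguments. Unset Strict Implicit. Unset Printing Implicit Defensive.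

(* Feeding z'' after z' is feeding z'' to the buffer w = Q(z', s') instead of
   the empty buffer, so it suffices that |x| <= |y| + |w| survives along two
   runs x, y driven by the same arrivals.  For FCFM and LCFM the invariant is
   that x and y have a common subsequence c with |x| + |y| <= |w| + 2|c|
   (indel distance at most |w|): an arrival deletes a matching letter in both
   buffers, or in one of them while the other appends it, or is appended to
   both.  The random policies and ML only look at class details, and their
   choices in x and y are coherent enough that the l1 distance between the two
   class details, initially |w|, never increases. *)

Lemma foldl_size_subadditive (A B : Type) (f : seq A -> B -> seq A)
    (R : nat -> seq A -> seq A -> Prop) :
  (forall w, R (size w) w [::]) ->
  (forall n x y, R n x y -> size x <= size y + n) ->
  (forall n x y b, R n x y -> R n (f x b) (f y b)) ->
  forall w l, size (foldl f w l) <= size w + size (foldl f [::] l).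
Proof.
move=> R_nil R_size R_step w l; rewrite addnC; apply: R_size.
have foldl_R n x y : R n x y -> R n (foldl f x l) (foldl f y l).
  by elim: l x y => //= b l IHl x y /(R_step _ _ _ b); apply: IHl.
exact: foldl_R (R_nil w).
Qed.

Section DeleteFirst.
Variables (T : Type) (P : pred T).

Fixpoint del_first (s : seq T) : seq T :=
  if s is a :: s' then (if P a then s' else a :: del_first s') else [::].

Definition del_last (s : seq T) : seq T := rev (del_first (rev s)).

Lemma size_del_first s : size (del_first s) = size s - has P s.
Proof.
elim: s => //= a s IHs; case: (P a) => /=; first by rewrite subn1.
by rewrite {}IHs; case: s => [|b s] //=; case: (_ || _); rewrite ?subn0 ?subn1.
Qed.

Lemma del_first_id s : ~~ has P s -> del_first s = s.
Proof. by elim: s => //= a s IHs /norP[/negbTE -> /IHs ->]. Qed.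

Lemma size_del_last s : size (del_last s) = size s - has P s.
Proof. by rewrite /del_last size_rev size_del_first size_rev has_rev. Qed.

Lemma del_last_id s : ~~ has P s -> del_last s = s.
Proof. by rewrite -has_rev => /del_first_id; rewrite /del_last => ->; rewrite revK. Qed.

End DeleteFirst.

Section DeleteSubseq.
Variables (T : eqType) (P : pred T).

Lemma del_first_subseq s : subseq (del_first P s) s.
Proof.
elim: s => // a s IHs; rewrite [del_first _ _]/=.
by case: (P a); [apply: subseq_cons | rewrite /= eqxx].
Qed.

Lemma subseq_del_first : {homo del_first P : s1 s2 / subseq s1 s2}.
Proof.
move=> s1 s2; elim: s2 s1 => [|a2 s2 IHs2] [|a1 s1]; rewrite ?sub0seq //=.
have [->|_] := eqVneq a1 a2; first by case: (P a2) => //= /IHs2; rewrite eqxx.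
move=> /IHs2 /subseq_trans -> //.
by case: (P a2); [apply: del_first_subseq | apply: subseq_cons].
Qed.

Lemma subseq_del_last : {homo del_last P : s1 s2 / subseq s1 s2}.
Proof. by move=> s1 s2; rewrite /del_last subseq_rev -subseq_rev; apply: subseq_del_first. Qed.

End DeleteSubseq.

Lemma del_at_find (T : finType) (P : pred T) w : del_at (find P w) w = del_first P w.
Proof. by elim: w => //= a w IHw; case: (P a); rewrite /= -?IHw // /del_at /= drop0. Qed.

Lemma del_at_find_last (T : finType) (P : pred T) w : has P w ->
  del_at ((size w).-1 - find P (rev w)) w = del_last P w.
Proof.
rewrite -has_rev has_find size_rev /del_last -del_at_find /del_at rev_cat.
move: (find P (rev w)) => k lt_k_w.
rewrite rev_drop rev_take !size_rev !revK.
by congr (take _ _ ++ drop _ _); lia.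
Qed.

Section IndelDistance.
Variable T : eqType.
Implicit Types (c x y w : seq T) (v : T).

Definition indel_le n x y :=
  exists c, [/\ subseq c x, subseq c y & size x + size y <= n + (size c).*2].

Lemma indel_le_nil w : indel_le (size w) w [::].
Proof. by exists [::]; rewrite !sub0seq addn0. Qed.

Lemma indel_le_size n x y : indel_le n x y -> size x <= size y + n.
Proof. by case=> c [_ /size_subseq le_cy le_xy]; lia. Qed.

Lemma indel_le_sym n x y : indel_le n x y -> indel_le n y x.
Proof. by case=> c [cx cy le_xy]; exists c; split; rewrite // addnC. Qed.

Lemma indel_le_rcons n x y v : indel_le n x y -> indel_le n (rcons x v) (rcons y v).
Proof.
case=> c [cx cy le_xy]; exists (rcons c v).
by rewrite -!cats1 !subseq_cat2r !size_cat /=; split => //; lia.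
Qed.

Lemma has_leq_size (P : pred T) s : has P s <= size s.
Proof. by case: s => //= a s; case: (_ || _). Qed.

Lemma has_subseq (P : pred T) c x : subseq c x -> has P c -> has P x.
Proof. by move/mem_subseq => cx /hasP[a /cx ax Pa]; apply/hasP; exists a. Qed.

Section MatchStep.
Variables (P : pred T) (del : seq T -> seq T).
Hypothesis subseq_del : {homo del : s1 s2 / subseq s1 s2}.
Hypothesis size_del : forall s, size (del s) = size s - has P s.
Hypothesis del_id : forall s, ~~ has P s -> del s = s.

Definition match_step v w := if has P w then del w else rcons w v.

Lemma indel_le_del n x y : indel_le n x y -> indel_le n (del x) (del y).
Proof.
case=> c [cx cy le_xy]; exists (del c); split; rewrite ?subseq_del //.
have has_cx : has P c <= has P x by case: (has P c) (@has_subseq P _ _ cx) => // ->.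
have has_cy : has P c <= has P y by case: (has P c) (@has_subseq P _ _ cy) => // ->.
have := has_leq_size P x; have := has_leq_size P y; have := has_leq_size P c.
rewrite !size_del; lia.
Qed.

Lemma indel_le_del_rcons n x y v : has P x -> ~~ has P y ->
  indel_le n x y -> indel_le n (del x) (rcons y v).
Proof.
move=> Px nPy [c [cx cy le_xy]]; exists c.
have nPc : ~~ has P c by apply: contra nPy; apply: has_subseq.
rewrite -{1}(del_id nPc) subseq_del // size_del size_rcons Px.
split=> //; first exact: subseq_trans cy (subseq_rcons y v).
by have := has_leq_size P x; rewrite Px; lia.
Qed.

Lemma indel_le_match_step n x y v :
  indel_le n x y -> indel_le n (match_step v x) (match_step v y).
Proof.
rewrite /match_step => xy.
case Px: (has P x); case Py: (has P y).
- exact: indel_le_del.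
- by apply: indel_le_del_rcons; rewrite ?Py.
- by apply/indel_le_sym/indel_le_del_rcons; rewrite ?Px //; apply: indel_le_sym.
- exact: indel_le_rcons.
Qed.
End MatchStep.
End IndelDistance.

Lemma step_fcfm_match (T : finType) (e : rel T) w v :
  step_fcfm e w v = match_step (e v) (del_first (e v)) v w.
Proof. by rewrite /step_fcfm /match_step del_at_find. Qed.

Lemma step_lcfm_match (T : finType) (e : rel T) w v :
  step_lcfm e w v = match_step (e v) (del_last (e v)) v w.
Proof. by rewrite /step_lcfm /match_step; case: ifP => // /del_at_find_last ->. Qed.

Lemma indel_le_step_fcfm (T : finType) (e : rel T) n x y v :
  indel_le n x y -> indel_le n (step_fcfm e x v) (step_fcfm e y v).
Proof.
rewrite !step_fcfm_match; apply: indel_le_match_step.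
- exact: subseq_del_first.
- exact: size_del_first.
- exact: del_first_id.
Qed.

Lemma indel_le_step_lcfm (T : finType) (e : rel T) n x y v :
  indel_le n x y -> indel_le n (step_lcfm e x v) (step_lcfm e y v).
Proof.
rewrite !step_lcfm_match; apply: indel_le_match_step.
- exact: subseq_del_last.
- exact: size_del_last.
- exact: del_last_id.
Qed.

Section DetailDistance.
Variable T : finType.
Implicit Types (x y w : seq T) (v : T) (ox oy : option T).

Definition detail_dist x y :=
  \sum_(i : T) ((detail x i - detail y i) + (detail y i - detail x i)).

Lemma sum_pred1 (a : T) : \sum_(i : T) (a == i) = 1.
Proof. by rewrite (bigD1 a) //= eqxx big1 // => i; rewrite eq_sym => /negbTE ->. Qed.

Lemma leq_sum_shift (F G : T -> nat) a b :
  (forall i, F i + (a == i) <= G i + (b == i)) -> \sum_i F i <= \sum_i G i.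
Proof.
move=> le_FG; rewrite -(leq_add2r 1) -{1}(sum_pred1 a) -(sum_pred1 b) -!big_split /=.
by apply: leq_sum => i _.
Qed.

Lemma sum_detail w : \sum_(i : T) detail w i = size w.
Proof.
elim: w => [|a w IHw]; first by rewrite big1.
by rewrite /detail /=; under eq_bigr do rewrite -/(detail w _); rewrite big_split sum_pred1 IHw.
Qed.

Lemma size_leq_detail_dist x y : size x <= size y + detail_dist x y.
Proof. by rewrite -!sum_detail -big_split /=; apply: leq_sum => i _; lia. Qed.

Lemma detail_dist_nil w : detail_dist w [::] = size w.
Proof. by rewrite -sum_detail; apply: eq_bigr => i _; rewrite /detail /=; lia. Qed.

Lemma detail_rem j w i : detail (rem j w) i = detail w i - (j == i).
Proof. exact: count_mem_rem. Qed.

Lemma detail_rcons w v i : detail (rcons w v) i = detail w i + (v == i).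
Proof. by rewrite /detail -cats1 count_cat /= addn0. Qed.

Definition update w v (o : option T) := if o is Some j then rem j w else rcons w v.

Definition coherent x y ox oy :=
  match ox, oy with
  | Some j, Some k => [/\ 0 < detail x j, 0 < detail y k &
      j = k \/ detail y j < detail x j \/ detail x k < detail y k]
  | Some j, None => detail y j < detail x j
  | None, Some k => detail x k < detail y k
  | None, None => True
  end.

Lemma detail_dist_update x y v ox oy : coherent x y ox oy ->
  detail_dist (update x v ox) (update y v oy) <= detail_dist x y.
Proof.
rewrite /detail_dist; case: ox => [j|]; case: oy => [k|] /=.
- case=> xj yk [eq_jk|lt_jk].
    subst k; apply: (@leq_sum_shift _ _ j j) => i; rewrite !detail_rem.
    by case: (eqVneq j i) => [?|_]; subst; lia.
  case: lt_jk => lt; [apply: (@leq_sum_shift _ _ j k)|apply: (@leq_sum_shift _ _ k j)];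
    move=> i; rewrite !detail_rem;
    by case: (eqVneq j i) => [?|_]; case: (eqVneq k i) => [?|_]; subst; lia.
- move=> lt_j; apply: (@leq_sum_shift _ _ j v) => i; rewrite detail_rem detail_rcons.
  by case: (eqVneq j i) => [?|_]; case: (eqVneq v i) => [?|_]; subst; lia.
- move=> lt_k; apply: (@leq_sum_shift _ _ k v) => i; rewrite detail_rem detail_rcons.
  by case: (eqVneq k i) => [?|_]; case: (eqVneq v i) => [?|_]; subst; lia.
- move=> _; apply: (@leq_sum_shift _ _ v v) => i; rewrite !detail_rcons; lia.
Qed.

End DetailDistance.

Lemma head_filter_eq (T : eqType) (s : seq T) (p q : pred T) j k l1 l2 :
  filter p s = j :: l1 -> filter q s = k :: l2 -> p k -> q j -> j = k.
Proof.
elim: s l1 l2 => //= a s IHs l1 l2.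
case pa: (p a); case qa: (q a) => /=.
- by case=> <- _ [<-].
- by case=> <- _ _ _; rewrite qa.
- by move=> _ [<- _]; rewrite pa.
- exact: IHs.
Qed.

Lemma mem_head_filter (T : eqType) (p : pred T) s k l :
  filter p s = k :: l -> (k \in s) && p k.
Proof. by move=> Es; rewrite andbC -mem_filter Es mem_head. Qed.

Lemma bigmax_seq_attained (I : eqType) (r : seq I) (P : pred I) (F : I -> nat) :
  has P r -> exists2 i, (i \in r) && P i & F i = \max_(i <- r | P i) F i.
Proof.
elim: r => //= a r IHr; rewrite big_cons.
have [Pr|nPr] := boolP (has P r).
  have [i /andP[ir Pi] <-] := IHr Pr => _.
  case: ifP => Pa; last by exists i; rewrite ?inE ?ir ?orbT.
  case: (leqP (F i) (F a)) => [le_ia|lt_ai].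
    by exists a; rewrite ?inE ?eqxx ?Pa //; apply/esym/maxn_idPl.
  by exists i; rewrite ?inE ?ir ?orbT //; apply/esym/maxn_idPr/ltnW.
rewrite orbF => Pa; rewrite Pa big_hasC // maxn0.
by exists a; rewrite ?inE ?eqxx.
Qed.

Section Policies.
Variables (T : finType) (e : rel T).
Implicit Types (x y : seq T) (v : T) (s : prefs T).

Definition matchable s v x := [seq j <- s v | e v j & 0 < detail x j].

Definition longest s v x :=
  [seq j <- s v | [&& e v j, 0 < detail x j &
                      detail x j == \max_(k <- s v | e v k) detail x k]].

Lemma step_random_update x v s : step_random e x v s = update x v (ohead (matchable s v x)).
Proof. by rewrite /step_random /matchable; case: filter. Qed.

Lemma step_ml_update x v s : step_ml e x v s = update x v (ohead (longest s v x)).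
Proof. by rewrite /step_ml /longest; case: filter. Qed.

Lemma coherent_matchable x y v s :
  coherent x y (ohead (matchable s v x)) (ohead (matchable s v y)).
Proof.
rewrite /matchable; case Ex: filter => [|j l1]; case Ey: filter => [|k l2] //=.
- have /andP[ks /andP[ek yk]] := mem_head_filter Ey.
  have : k \notin [seq j <- s v | e v j & 0 < detail x j] by rewrite Ex.
  by rewrite mem_filter ks ek andbT -leqNgt leqn0 => /eqP ->.
- have /andP[js /andP[ej xj]] := mem_head_filter Ex.
  have : j \notin [seq j <- s v | e v j & 0 < detail y j] by rewrite Ey.
  by rewrite mem_filter js ej andbT -leqNgt leqn0 => /eqP ->.
- have /andP[js /andP[ej xj]] := mem_head_filter Ex.
  have /andP[ks /andP[ek yk]] := mem_head_filter Ey.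
  split=> //; case: (posnP (detail y j)) => [yj0|yj]; first by right; left; rewrite yj0.
  case: (posnP (detail x k)) => [xk0|xk]; first by right; right; rewrite xk0.
  by left; apply: (head_filter_eq Ex Ey); rewrite ?ek ?ej.
Qed.

Lemma longest_nil x v s k :
  longest s v x = [::] -> k \in s v -> e v k -> detail x k = 0.
Proof.
move=> Ex ks ek; apply/eqP; rewrite -leqn0 leqNgt; apply/negP => xk.
have [|i /andP[si ei] xi] := @bigmax_seq_attained _ (s v) (e v) (detail x).
  by apply/hasP; exists k.
have : i \in longest s v x.
  rewrite mem_filter si ei xi eqxx andbT /= (leq_trans xk) //.
  exact: leq_bigmax_seq.
by rewrite Ex.
Qed.

Lemma coherent_longest x y v s :
  coherent x y (ohead (longest s v x)) (ohead (longest s v y)).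
Proof.
case Ex: (longest s v x) => [|j l1]; case Ey: (longest s v y) => [|k l2] //=.
- have /andP[ks /and3P[ek yk _]] := mem_head_filter Ey.
  by rewrite (longest_nil Ex ks ek).
- have /andP[js /and3P[ej xj _]] := mem_head_filter Ex.
  by rewrite (longest_nil Ey js ej).
- have /andP[js /and3P[ej xj /eqP xj_max]] := mem_head_filter Ex.
  have /andP[ks /and3P[ek yk /eqP yk_max]] := mem_head_filter Ey.
  split=> //; case: (ltnP (detail y j) (detail x j)) => [|xj_yj]; first by right; left.
  case: (ltnP (detail x k) (detail y k)) => [|yk_xk]; first by right; right.
  have xk_xj : detail x k <= detail x j by rewrite xj_max; apply: leq_bigmax_seq.
  have yj_yk : detail y j <= detail y k by rewrite yk_max; apply: leq_bigmax_seq.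
  by left; apply: (head_filter_eq Ex Ey); apply/and3P; split=> //; lia.
Qed.

Lemma detail_dist_step_random x y v s :
  detail_dist (step_random e x v s) (step_random e y v s) <= detail_dist x y.
Proof. by rewrite !step_random_update; apply/detail_dist_update/coherent_matchable. Qed.

Lemma detail_dist_step_ml x y v s :
  detail_dist (step_ml e x v s) (step_ml e y v s) <= detail_dist x y.
Proof. by rewrite !step_ml_update; apply/detail_dist_update/coherent_longest. Qed.

End Policies.

Theorem mainTheorem6 (T : finType) (e : rel T)
  (Hgraph : simple_connected_graph e)
  (phi : policy) (supp : pred (prefs T))
  (Hsupp : forall s, supp s -> is_pref e s)
  (z1 z2 : seq T) (s1 s2 : seq (prefs T)) :
  all supp s1 -> all supp s2 ->
  size s1 = size z1 -> size s2 = size z2 ->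
  size (Q e phi (z1 ++ z2) (s1 ++ s2))
    <= size (Q e phi z1 s1) + size (Q e phi z2 s2).
Proof.
(* Neither the graph nor the preference lists need to satisfy any property. *)
move=> _ _ size_s1 _; rewrite /Q zip_cat // foldl_cat.
pose detail_le n (x y : seq T) : Prop := detail_dist x y <= n.
have detail_le_nil w : detail_le (size w) w [::] by rewrite /detail_le detail_dist_nil.
have detail_le_size n x y : detail_le n x y -> size x <= size y + n.
  by move=> xy; apply: leq_trans (size_leq_detail_dist x y) _; rewrite leq_add2l.
case: phi.
- apply: (foldl_size_subadditive (R := @indel_le T)) => [w|n x y|n x y [v s]].
  + exact: indel_le_nil.
  + exact: indel_le_size.
  + exact: indel_le_step_fcfm.
- apply: (foldl_size_subadditive (R := @indel_le T)) => [w|n x y|n x y [v s]].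
  + exact: indel_le_nil.
  + exact: indel_le_size.
  + exact: indel_le_step_lcfm.
- apply: (foldl_size_subadditive (R := detail_le)) => // n x y [v s].
  exact/leq_trans/detail_dist_step_random.
- apply: (foldl_size_subadditive (R := detail_le)) => // n x y [v s].
  exact/leq_trans/detail_dist_step_ml.
Qed.
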